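(* Let $\mathbf{L}=\langle L,\leq,0,1\rangle$ be a totally ordered complete lattice, let $f\colon L\to L$ be an order embedding, and let $\mathcal{D}_1,\mathcal{D}_2,\mathcal{D}_3$ be ranked data tables for which both sides of the following equalities are defined. Then (1) $(\mathcal{D}_1\div^{\mathcal{D}_3}\mathcal{D}_2)\circ f=(\mathcal{D}_1\circ f)\div^{\mathcal{D}_3\circ f}(\mathcal{D}_2\circ f)$; (2) $(\mathcal{D}_1\rightarrow^{\mathcal{D}_3}\mathcal{D}_2)\circ f=(\mathcal{D}_1\circ f)\rightarrow^{\mathcal{D}_3\circ f}(\mathcal{D}_2\circ f)$; (3) if $f(0)=0$, then $(\mathcal{D}_1-\mathcal{D}_2)\circ f=(\mathcal{D}_1\circ f)-(\mathcal{D}_2\circ f)$; (4) if $f(1)=1$, then $f(\mathrm{S}(\mathcal{D}_1,\mathcal{D}_2))=\mathrm{S}(\mathcal{D}_1\circ f,\mathcal{D}_2\circ f)$.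
   Context: A relation scheme is a finite set of attributes, each with a (at most countable) set of admissible values; $\mathrm{Tupl}(R)$ is the set of tuples on $R$ (maps assigning to each attribute of $R$ an admissible value). For disjoint $R,S$ and $r\in\mathrm{Tupl}(R)$, $s\in\mathrm{Tupl}(S)$, $rs$ is the tuple on $R\cup S$ extending both. A ranked data table (RDT) on $R$ is a map $\mathcal{D}\colon\mathrm{Tupl}(R)\to L$ with $\{r;\ \mathcal{D}(r)>0\}$ finite. $\mathcal{D}\circ f$ denotes $r\mapsto f(\mathcal{D}(r))$, and operations are applied to such maps by the same formulas. On $L$ define $a\rightarrow b=1$ if $a\leq b$ and $a\rightarrow b=b$ otherwise; $a\ominus b=0$ if $a\leq b$ and $a\ominus b=a$ otherwise. Operations: for $\mathcal{D}_1$ on $R\cup S$ with $R\cap S=\emptyset$, $\mathcal{D}_2$ on $S$ and $\mathcal{D}_3$ on $R$, the division is the map on $\mathrm{Tupl}(R)$ given by $(\mathcal{D}_1\div^{\mathcal{D}_3}\mathcal{D}_2)(r)=\inf\big(\{\mathcal{D}_2(s)\rightarrow\mathcal{D}_1(rs);\ s\in\mathrm{Tupl}(S)\}\cup\{\mathcal{D}_3(r)\}\big)$. For $\mathcal{D}_1,\mathcal{D}_2,\mathcal{D}_3$ on the same $R$: $(\mathcal{D}_1\rightarrow^{\mathcal{D}_3}\mathcal{D}_2)(r)=\inf\{\mathcal{D}_3(r),\mathcal{D}_1(r)\rightarrow\mathcal{D}_2(r)\}$. For $\mathcal{D}_1,\mathcal{D}_2$ on the same $R$: $(\mathcal{D}_1-\mathcal{D}_2)(r)=\mathcal{D}_1(r)\ominus\mathcal{D}_2(r)$,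 and the subsethood score is $\mathrm{S}(\mathcal{D}_1,\mathcal{D}_2)=\inf\{\mathcal{D}_1(r)\rightarrow\mathcal{D}_2(r);\ r\in\mathrm{Tupl}(R)\}\in L$. A map $f$ is an order embedding if $a\leq b \iff f(a)\leq f(b)$. *)

From HB Require Import structures.
From mathcomp Require Import all_boot all_order.
From mathcomp Require Import finmap.
From mathcomp Require Import boolp classical_sets cardinality.
Set Implicit Arguments. Unset Strict Implicit. Unset Printing Implicit Defensive.
Import Order.TTheory.
Local Open Scope order_scope.
Local Open Scope fset_scope.
Local Open Scope classical_set_scope.

Section RDT.
Context {d : Order.disp_t} {L : tbOrderType d}.

Definition is_glb (X : set L) (a : L) :=
  (forall x, X x -> a <= x) /\ (forall b, (forall x, X x -> b <= x) -> b <= a).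

Definition complete_lattice := forall X : set L, exists a, is_glb X a.

Definition inf (HL : complete_lattice) (X : set L) : L :=
  proj1_sig (cid (HL X)).

(* the residuum of the Goedel structure and the difference *)
Definition impl (a b : L) : L := if a <= b then \top else b.
Definition ominus (a b : L) : L := if a <= b then \bot else a.

Definition order_embedding (f : L -> L) := forall a b, (a <= b) = (f a <= f b).

(* relation schemes: attributes of type A, admissible values dom a *)
Context {A : choiceType} (dom : A -> countType).

Definition Tupl (R : {fset A}) := forall a : R, dom (fsval a).

Lemma tcat_aux (R S : {fset A}) (a : A) :
  a \in fsetU R S -> (a \in R) = false -> a \in S.
Proof. by rewrite in_fsetU => /orP [->|]. Qed.

(* rs : the tuple on R `|` S extending r and s (R, S disjoint) *)
Definition tcat (R S : {fset A}) (r : Tupl R) (s : Tupl S) : Tupl (fsetU R S) :=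
  fun a =>
    match fsval a \in R as b return (fsval a \in R) = b -> dom (fsval a) with
    | true => fun h => r [` h]
    | false => fun h => s [` tcat_aux (fsvalP a) h]
    end erefl.

(* ranked data tables: maps into L with finite support *)
Definition is_rdt (R : {fset A}) (D : Tupl R -> L) :=
  finite_set [set r | \bot < D r].

Variable HL : complete_lattice.

Definition rdiv (R S : {fset A}) (D1 : Tupl (fsetU R S) -> L) (D2 : Tupl S -> L)
  (D3 : Tupl R -> L) : Tupl R -> L :=
  fun r => inf HL ([set impl (D2 s) (D1 (tcat r s)) | s in [set: Tupl S]]
                   `|` [set D3 r]).

Definition rimpl (R : {fset A}) (D1 D2 D3 : Tupl R -> L) : Tupl R -> L :=
  fun r => inf HL [set D3 r; impl (D1 r) (D2 r)].

Definition rminus (R : {fset A}) (D1 D2 : Tupl R -> L) : Tupl R -> L :=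
  fun r => ominus (D1 r) (D2 r).

Definition subsethood (R : {fset A}) (D1 D2 : Tupl R -> L) : L :=
  inf HL [set impl (D1 r) (D2 r) | r in [set: Tupl R]].

End RDT.

(* In a chain, an infimum whose non-top part ranges over a finite set is attained
   (or is the top element), so a monotone map commutes with it.  An order
   embedding f commutes with the Goedel residuum up to its value at the top:
   f a -> f b is the image of a -> b under f with f 1 replaced by 1.  Where the
   infimum also contains f (D3 r), this correction is absorbed since
   f (D3 r) <= f 1; for the subsethood score it disappears when f 1 = 1. *)
From HB Require Import structures.
From mathcomp Require Import all_boot all_order.
From mathcomp Require Import finmap.
From mathcomp Require Import boolp classical_sets cardinality.
Import Order.TTheory.
Local Open Scope order_scope.
Local Open Scope fset_scope.
Local Open Scope classical_set_scope.

Section CompleteChain.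
Context {d : Order.disp_t} {L : tbOrderType d}.
Variable HL : complete_lattice (L := L).

Lemma inf_lb (X : set L) x : X x -> inf HL X <= x.
Proof. by rewrite /inf; case: cid => a [lb _] /=; apply: lb. Qed.

Lemma inf_glb (X : set L) b : (forall x, X x -> b <= x) -> b <= inf HL X.
Proof. by rewrite /inf; case: cid => a [_ glb] /=; apply: glb. Qed.

Lemma inf_eq_min (X : set L) m : X m -> (forall x, X x -> m <= x) -> inf HL X = m.
Proof. by move=> Xm lb; apply/le_anti; rewrite inf_lb // inf_glb. Qed.

Lemma inf_setU1 (X : set L) c : inf HL (X `|` [set c]) = Order.min (inf HL X) c.
Proof.
apply/le_anti/andP; split.
  rewrite le_min (@inf_lb _ c) ?andbT; last by right.
  by apply: inf_glb => x Xx; apply: inf_lb; left.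
by apply: inf_glb => x [Xx|->]; rewrite ge_min ?lexx ?orbT // inf_lb.
Qed.

Lemma inf_set2 (a b : L) : inf HL [set a; b] = Order.min a b.
Proof. by rewrite inf_setU1 (@inf_eq_min _ a) // => x ->. Qed.

Lemma exists_seq_min (s : seq L) :
  exists m, (forall x, x \in s -> m <= x) /\ (m = \top \/ m \in s).
Proof.
elim: s => [|x s [m [lbm hm]]]; first by exists \top; split => //; left.
exists (Order.min x m); split.
  move=> y; rewrite in_cons => /orP [/eqP ->|ys]; first by rewrite ge_min lexx.
  by rewrite ge_min lbm ?orbT.
case: (leP x m) => _; first by right; rewrite mem_head.
by case: hm => [->|ms]; [left|right; rewrite in_cons ms orbT].
Qed.

Lemma inf_cofinite (X : set L) : finite_set (X `\` [set \top]) ->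
  inf HL X = \top \/ X (inf HL X).
Proof.
move=> /finite_fsetP [B eqB].
have inB x : X x -> x != \top -> x \in B.
  move=> Xx xntop; have : (X `\` [set \top]) x by split => // /eqP; apply/negP.
  by rewrite eqB.
have [m [lbm [mtop|mB]]] := exists_seq_min B.
  left; apply/eqP; rewrite -le1x; apply: inf_glb => x Xx.
  by have [->//|xntop] := eqVneq x \top; rewrite -mtop lbm ?inB.
have [Xm _] : (X `\` [set \top]) m by rewrite eqB.
right; rewrite (@inf_eq_min _ m) // => x Xx.
by have [->|xntop] := eqVneq x \top; rewrite ?lex1 ?lbm ?inB.
Qed.

Lemma inf_image_homo (g : L -> L) (X : set L) :
  {homo g : x y / x <= y} -> g \top = \top -> finite_set (X `\` [set \top]) ->
  inf HL (g @` X) = g (inf HL X).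
Proof.
move=> ghomo gtop /inf_cofinite [inftop|Xinf].
  have Xtop x : X x -> x = \top by move=> Xx; apply/eqP; rewrite -le1x -inftop inf_lb.
  rewrite inftop gtop; apply/eqP; rewrite -le1x.
  by apply: inf_glb => _ [x Xx <-]; rewrite (Xtop x Xx) gtop.
by apply: inf_eq_min => [|_ [x Xx <-]]; [exists (inf HL X)|apply/ghomo/inf_lb].
Qed.

End CompleteChain.

Section OrderEmbedding.
Context {d : Order.disp_t} {L : tbOrderType d}.
Variable f : L -> L.
Hypothesis hf : order_embedding f.

Definition fixtop (x : L) : L := if x == \top then \top else f x.

Lemma homo_embedding : {homo f : x y / x <= y}.
Proof. by move=> x y; rewrite hf. Qed.

Lemma embedding_min a b : f (Order.min a b) = Order.min (f a) (f b).
Proof.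
by case: (leP a b) => [ab|/ltW ba]; [rewrite !min_l // -hf|rewrite !min_r // -hf].
Qed.

Lemma fixtop_top : fixtop \top = \top.
Proof. by rewrite /fixtop eqxx. Qed.

Lemma fixtop_homo : {homo fixtop : x y / x <= y}.
Proof.
move=> x y xy; rewrite /fixtop.
have [xtop|_] := eqVneq x \top.
  by move: xy; rewrite xtop le1x => /eqP ->; rewrite eqxx.
by case: eqP => _; [apply: lex1|apply: homo_embedding].
Qed.

Lemma fixtop_id : f \top = \top -> fixtop =1 f.
Proof. by move=> ftop x; rewrite /fixtop; case: eqP => // ->. Qed.

Lemma impl_embedding a b : impl (f a) (f b) = fixtop (impl a b).
Proof.
rewrite /impl /fixtop -hf; case: ifP => [_|nab]; first by rewrite eqxx.
suff /negbTE -> : b != \top by [].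
by apply: contraFN nab => /eqP ->; apply: lex1.
Qed.

Lemma ominus_embedding a b : f \bot = \bot -> ominus (f a) (f b) = f (ominus a b).
Proof. by move=> fbot; rewrite /ominus -hf; case: ifP. Qed.

Lemma min_fixtop c y : Order.min (f c) (fixtop y) = Order.min (f c) (f y).
Proof.
rewrite /fixtop; case: eqP => // ->.
by rewrite !min_l ?lex1 // -hf lex1.
Qed.

Lemma image_impl_embedding T (D E : T -> L) (X : set T) :
  [set impl (f (D s)) (f (E s)) | s in X] = fixtop @` [set impl (D s) (E s) | s in X].
Proof. by rewrite image_comp; apply: eq_imagel => s _; rewrite impl_embedding. Qed.

End OrderEmbedding.

Lemma finite_impl_nontop d (L : tbOrderType d) T (D E : T -> L) :
  finite_set [set s | \bot < D s] ->
  finite_set ([set impl (D s) (E s) | s in [set: T]] `\` [set \top]).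
Proof.
move=> /(finite_image (fun s => impl (D s) (E s))); apply: sub_finite_set.
move=> _ [[s _ <-] ntop]; exists s => //=; rewrite lt0x.
by apply/negP => /eqP Dbot; apply: ntop; rewrite /= /impl Dbot le0x.
Qed.

Theorem theorem7 (d : Order.disp_t) (L : tbOrderType d) (HL : complete_lattice (L := L))
  (f : L -> L) (hf : order_embedding f) (A : choiceType) (dom : A -> countType) :
  (forall (R S : {fset A}) (D1 : Tupl dom (fsetU R S) -> L) (D2 : Tupl dom S -> L)
     (D3 : Tupl dom R -> L),
     fsetI R S = fset0 ->
     is_rdt D1 -> is_rdt D2 -> is_rdt D3 ->
     is_rdt (f \o D1) -> is_rdt (f \o D2) -> is_rdt (f \o D3) ->
     f \o rdiv HL D1 D2 D3 = rdiv HL (f \o D1) (f \o D2) (f \o D3))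
  /\
  (forall (R : {fset A}) (D1 D2 D3 : Tupl dom R -> L),
     is_rdt D1 -> is_rdt D2 -> is_rdt D3 ->
     is_rdt (f \o D1) -> is_rdt (f \o D2) -> is_rdt (f \o D3) ->
     f \o rimpl HL D1 D2 D3 = rimpl HL (f \o D1) (f \o D2) (f \o D3))
  /\
  (f \bot = \bot ->
   forall (R : {fset A}) (D1 D2 : Tupl dom R -> L),
     is_rdt D1 -> is_rdt D2 -> is_rdt (f \o D1) -> is_rdt (f \o D2) ->
     f \o rminus D1 D2 = rminus (f \o D1) (f \o D2))
  /\
  (f \top = \top ->
   forall (R : {fset A}) (D1 D2 : Tupl dom R -> L),
     is_rdt D1 -> is_rdt D2 -> is_rdt (f \o D1) -> is_rdt (f \o D2) ->
     f (subsethood HL D1 D2) = subsethood HL (f \o D1) (f \o D2)).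
Proof.
have homo_fixtop := fixtop_homo f hf.
split; [|split; [|split]].
- move=> R S D1 D2 D3 _ _ finD2 _ _ _ _; apply: funext => r /=.
  rewrite /rdiv !inf_setU1 (image_impl_embedding f hf).
  rewrite inf_image_homo ?fixtop_top //; last exact: finite_impl_nontop.
  by rewrite (embedding_min f hf) [LHS]minC [RHS]minC (min_fixtop f hf).
- move=> R D1 D2 D3 _ _ _ _ _ _; apply: funext => r /=.
  by rewrite /rimpl !inf_set2 (impl_embedding f hf) (embedding_min f hf) (min_fixtop f hf).
- move=> fbot R D1 D2 _ _ _ _; apply: funext => r.
  by rewrite /rminus /= (ominus_embedding f hf).
- move=> ftop R D1 D2 finD1 _ _ _; rewrite /subsethood (image_impl_embedding f hf).
  rewrite inf_image_homo ?fixtop_top ?fixtop_id //; exact: finite_impl_nontop.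
Qed.
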